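(* Let $F$ be a field and $n\ge1$. For $r=\sum_i a_i\otimes b_i\in M_n(F)\otimes M_n(F)$ define $P_r\colon M_n(F)\to M_n(F)$ by $P_r(x)=\sum_i a_i x b_i$. Then the map $r\mapsto P_r$ is a bijection between the set of solutions $r\in M_n(F)\otimes M_n(F)$ of the associative Yang–Baxter equation and the set of Rota–Baxter operators of weight zero on $M_n(F)$.
   Context: A linear operator $R$ on an algebra $A$ is a Rota–Baxter operator of weight $0$ if $R(x)R(y)=R(R(x)y+xR(y))$ for all $x,y$. For an associative unital algebra $A$ and $r=\sum_i a_i\otimes b_i\in A\otimes A$, put $r_{12}=\sum a_i\otimes b_i\otimes 1$, $r_{13}=\sum a_i\otimes 1\otimes b_i$, $r_{23}=\sum 1\otimes a_i\otimes b_i$ in $A^{\otimes 3}$ (with componentwise multiplication). $r$ is a solution of the associative Yang–Baxter equation if $r_{13}r_{12}-r_{12}r_{23}+r_{23}r_{13}=0$. *)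

From HB Require Import structures.
From mathcomp Require Import all_boot all_order all_algebra.
Set Implicit Arguments. Unset Strict Implicit. Unset Printing Implicit Defensive.
Import GRing.Theory.
Local Open Scope ring_scope.

(* Concrete model of tensor powers of A = M_n(F), using the matrix-unit basis
   E_ij = delta_mx i j.  An index of a basis element of A is a pair (i,j).
   - tensor2: an element of A (x) A, given by its coefficients:
       r = sum_{(i,j),(k,l)} r((i,j),(k,l)) E_ij (x) E_kl.
   - tensor3: an element of A (x) A (x) A, likewise. *)
Section Tensors.
Variables (F : fieldType) (n : nat).

Definition idx := ('I_n * 'I_n)%type.
Definition tensor2 := {ffun idx * idx -> F}.
Definition tensor3 := {ffun idx * idx * idx -> F}.

Definition tens (a b : 'M[F]_n) : tensor2 :=
  [ffun p : idx * idx => a p.1.1 p.1.2 * b p.2.1 p.2.2].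

(* componentwise multiplication in A (x) A (x) A, in coordinates:
   (E_{i1 k1} (x) E_{i2 k2} (x) E_{i3 k3}) (E_{k1 j1} (x) ...) = E_{i1 j1} (x) ... *)
Definition mul3 (x y : tensor3) : tensor3 :=
  [ffun p : idx * idx * idx =>
     \sum_(k1 : 'I_n) \sum_(k2 : 'I_n) \sum_(k3 : 'I_n)
        x ((p.1.1.1, k1), (p.1.2.1, k2), (p.2.1, k3)) *
        y ((k1, p.1.1.2), (k2, p.1.2.2), (k3, p.2.2))].

Definition one_coef (p : idx) : F := (1%:M : 'M[F]_n) p.1 p.2.

Definition r12 (r : tensor2) : tensor3 :=
  [ffun p : idx * idx * idx => r (p.1.1, p.1.2) * one_coef p.2].
Definition r13 (r : tensor2) : tensor3 :=
  [ffun p : idx * idx * idx => r (p.1.1, p.2) * one_coef p.1.2].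
Definition r23 (r : tensor2) : tensor3 :=
  [ffun p : idx * idx * idx => one_coef p.1.1 * r (p.1.2, p.2)].

Definition AYBE (r : tensor2) : Prop :=
  mul3 (r13 r) (r12 r) - mul3 (r12 r) (r23 r) + mul3 (r23 r) (r13 r) = 0.

Definition P_of (r : tensor2) (x : 'M[F]_n) : 'M[F]_n :=
  \sum_(p : idx * idx)
     r p *: (delta_mx p.1.1 p.1.2 *m x *m delta_mx p.2.1 p.2.2).

Definition RB0 (R : 'M[F]_n -> 'M[F]_n) : Prop :=
  linear R /\ forall x y, R x *m R y = R (R x *m y + x *m R y).

End Tensors.

From HB Require Import structures.
From mathcomp Require Import all_boot all_order all_algebra.
From mathcomp Require Import ring.
Set Implicit Arguments. Unset Strict Implicit. Unset Printing Implicit Defensive.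
Import GRing.Theory.
Local Open Scope ring_scope.

(* In coordinates P_r(x)_ab = sum_jk r((a,j),(k,b)) x_jk, so both P_r(x) P_r(y)
   and P_r(P_r(x) y + x P_r(y)) are contractions of a 3-tensor with x and y,
   namely of r12 r23 and of r13 r12 + r23 r13.  Hence the Rota-Baxter defect of
   P_r is the contraction of the AYBE defect of r; it vanishes for all x, y iff
   it vanishes on matrix units, i.e. iff r solves the AYBE.  Moreover r |-> P_r
   is a bijection from A (x) A onto all linear operators on A, with inverse
   R |-> (r((a,j),(k,b)) := R(E_jk)_ab). *)

Section RingSums.
Variables (R : pzSemiRingType) (I : finType).

Lemma sum_deltal (i0 : I) (f : I -> R) : \sum_i (i0 == i)%:R * f i = f i0.
Proof.
rewrite (bigD1 i0) //= eqxx mul1r big1 ?addr0 // => i /negbTE.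
by rewrite eq_sym => ->; rewrite mul0r.
Qed.

Lemma sum_deltar (i0 : I) (f : I -> R) : \sum_i f i * (i == i0)%:R = f i0.
Proof.
rewrite (bigD1 i0) //= eqxx mulr1 big1 ?addr0 // => i /negbTE ->.
by rewrite mulr0.
Qed.

Lemma sum_mul_sum2 (A B : I -> I -> R) :
  (\sum_i \sum_j A i j) * (\sum_k \sum_l B k l) =
  \sum_i \sum_j \sum_k \sum_l A i j * B k l.
Proof.
rewrite big_distrl; apply: eq_bigr => i _; rewrite big_distrl.
apply: eq_bigr => j _; rewrite big_distrr; apply: eq_bigr => k _.
by rewrite big_distrr.
Qed.

End RingSums.

Section NestedSums.
Variables (V : nmodType) (I : finType).

Lemma exchange_big3 (G : I -> I -> I -> V) :
  \sum_a \sum_b \sum_c G a b c = \sum_b \sum_c \sum_a G a b c.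
Proof. rewrite exchange_big; apply: eq_bigr => b _; exact: exchange_big. Qed.

Lemma exchange_big4 (G : I -> I -> I -> I -> V) :
  \sum_a \sum_b \sum_c \sum_d G a b c d = \sum_b \sum_c \sum_d \sum_a G a b c d.
Proof.
rewrite exchange_big; apply: eq_bigr => b _.
exact: (exchange_big3 (fun a c d => G a b c d)).
Qed.

Lemma exchange_big5 (G : I -> I -> I -> I -> I -> V) :
  \sum_a \sum_b \sum_c \sum_d \sum_e G a b c d e =
  \sum_b \sum_c \sum_d \sum_e \sum_a G a b c d e.
Proof.
rewrite exchange_big; apply: eq_bigr => b _.
exact: (exchange_big4 (fun a c d e => G a b c d e)).
Qed.

Lemma sum_pair_pair (G : (I * I) * (I * I) -> V) :
  \sum_p G p = \sum_i \sum_j \sum_k \sum_l G ((i, j), (k, l)).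
Proof.
transitivity (\sum_(p1 : I * I) \sum_(p2 : I * I) G (p1, p2)).
  by rewrite pair_bigA; apply: congr_big => //= -[].
transitivity (\sum_i \sum_j \sum_(p2 : I * I) G ((i, j), p2)).
  by rewrite [RHS]pair_bigA; apply: congr_big => //= -[].
apply: eq_bigr => i _; apply: eq_bigr => j _.
by rewrite [RHS]pair_bigA; apply: congr_big => //= -[].
Qed.

End NestedSums.

Section MatrixTensors.
Variables (F : fieldType) (n : nat).
Implicit Types (r : tensor2 F n) (t : tensor3 F n) (x y : 'M[F]_n).

Lemma delta_mx_mul_delta_mxE (i j k l a b : 'I_n) x :
  (delta_mx i j *m x *m delta_mx k l) a b = (a == i)%:R * x j k * (l == b)%:R.
Proof.
rewrite mxE (bigD1 k) //= big1 ?addr0.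
  rewrite mxE (bigD1 j) //= big1 ?addr0.
    by rewrite !mxE !eqxx /= andbT [l == b]eq_sym.
  by move=> d /negbTE dj; rewrite mxE dj andbF /= mul0r.
by move=> c /negbTE ck; rewrite [delta_mx k l c b]mxE ck /= mulr0.
Qed.

Lemma P_ofE r x a b : P_of r x a b = \sum_j \sum_k r ((a, j), (k, b)) * x j k.
Proof.
rewrite /P_of summxE sum_pair_pair.
rewrite -[RHS](sum_deltal a (fun i => \sum_j \sum_k r ((i, j), (k, b)) * x j k)).
apply: eq_bigr => i _; rewrite mulr_sumr; apply: eq_bigr => j _.
rewrite mulr_sumr; apply: eq_bigr => k _.
rewrite -(sum_deltar b (fun l => r ((i, j), (k, l)) * x j k)) mulr_sumr.
apply: eq_bigr => l _; rewrite mxE delta_mx_mul_delta_mxE /=; ring.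
Qed.

Lemma sum_mul_delta_mx (f : 'I_n -> 'I_n -> F) j k :
  \sum_j' \sum_k' f j' k' * (delta_mx j k : 'M[F]_n) j' k' = f j k.
Proof.
rewrite -[RHS](sum_deltar j (fun j' => f j' k)); apply: eq_bigr => j' _.
rewrite -(sum_deltar k (f j')) mulr_suml; apply: eq_bigr => k' _.
by rewrite mxE -mulrA -natrM mulnb andbC.
Qed.

Lemma P_of_delta_mx r j k a b : P_of r (delta_mx j k) a b = r ((a, j), (k, b)).
Proof. by rewrite P_ofE (sum_mul_delta_mx (fun j' k' => r ((a, j'), (k', b)))). Qed.

Lemma P_of_inj r1 r2 : P_of r1 =1 P_of r2 -> r1 = r2.
Proof.
move=> eq_P; apply/ffunP => -[[a j] [k b]].
by rewrite -[LHS]P_of_delta_mx eq_P P_of_delta_mx.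
Qed.

Lemma P_of_is_linear r : linear (P_of r).
Proof.
move=> c u v; apply/matrixP => a b.
rewrite [RHS]mxE [in RHS]mxE !P_ofE mulr_sumr -big_split; apply: eq_bigr => j _.
rewrite mulr_sumr -big_split; apply: eq_bigr => k _ /=.
rewrite !mxE; ring.
Qed.

Lemma one_coefE (i k : 'I_n) : one_coef F (i, k) = (i == k)%:R.
Proof. by rewrite /one_coef mxE. Qed.

Lemma mul3_r12_r23E r a j1 i2 j2 i3 b :
  mul3 (r12 r) (r23 r) ((a, j1), (i2, j2), (i3, b)) =
  \sum_c r ((a, j1), (i2, c)) * r ((c, j2), (i3, b)).
Proof.
rewrite ffunE /=.
rewrite -[RHS](sum_deltar j1
  (fun k1 => \sum_c r ((a, k1), (i2, c)) * r ((c, j2), (i3, b)))).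
apply: eq_bigr => k1 _; rewrite mulr_suml; apply: eq_bigr => k2 _.
rewrite -(sum_deltal i3
  (fun k3 => r ((a, k1), (i2, k2)) * r ((k2, j2), (k3, b)) * (k1 == j1)%:R)).
by apply: eq_bigr => k3 _; rewrite !ffunE /= !one_coefE; ring.
Qed.

Lemma mul3_r13_r12E r a j1 i2 j2 i3 b :
  mul3 (r13 r) (r12 r) ((a, j1), (i2, j2), (i3, b)) =
  \sum_c r ((a, c), (i3, b)) * r ((c, j1), (i2, j2)).
Proof.
rewrite ffunE /=; apply: eq_bigr => k1 _.
rewrite -(sum_deltal i2 (fun k2 => r ((a, k1), (i3, b)) * r ((k1, j1), (k2, j2)))).
apply: eq_bigr => k2 _.
rewrite -(sum_deltar b
  (fun k3 => (i2 == k2)%:R * (r ((a, k1), (i3, k3)) * r ((k1, j1), (k2, j2))))).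
by apply: eq_bigr => k3 _; rewrite !ffunE /= !one_coefE; ring.
Qed.

Lemma mul3_r23_r13E r a j1 i2 j2 i3 b :
  mul3 (r23 r) (r13 r) ((a, j1), (i2, j2), (i3, b)) =
  \sum_c r ((i2, j2), (i3, c)) * r ((a, j1), (c, b)).
Proof.
rewrite ffunE /=.
rewrite -[RHS](sum_deltal a
  (fun k1 => \sum_c r ((i2, j2), (i3, c)) * r ((k1, j1), (c, b)))).
apply: eq_bigr => k1 _.
rewrite -(sum_deltar j2
  (fun k2 => (a == k1)%:R * \sum_c r ((i2, k2), (i3, c)) * r ((k1, j1), (c, b)))).
apply: eq_bigr => k2 _; rewrite mulr_sumr mulr_suml; apply: eq_bigr => k3 _.
by rewrite !ffunE /= !one_coefE; ring.
Qed.

(* On pure tensors, (a (x) b (x) c, x, y) |-> a x b y c. *)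
Definition contract3 t x y : 'M[F]_n :=
  \matrix_(a, b) \sum_j1 \sum_i2 \sum_j2 \sum_i3
     t ((a, j1), (i2, j2), (i3, b)) * x j1 i2 * y j2 i3.

Lemma contract3_delta_mx t a j1 i2 j2 i3 b :
  contract3 t (delta_mx j1 i2) (delta_mx j2 i3) a b = t ((a, j1), (i2, j2), (i3, b)).
Proof.
rewrite mxE -(sum_mul_delta_mx (fun j2' i3' => t ((a, j1), (i2, j2'), (i3', b)))).
rewrite -(sum_mul_delta_mx (fun j1' i2' => \sum_j2' \sum_i3'
   t ((a, j1'), (i2', j2'), (i3', b)) * (delta_mx j2 i3 : 'M[F]_n) j2' i3') j1 i2).
apply: eq_bigr => j1' _; apply: eq_bigr => i2' _.
rewrite big_distrl; apply: eq_bigr => j2' _.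
by rewrite big_distrl; apply: eq_bigr => i3' _ /=; ring.
Qed.


Lemma contract3D t1 t2 x y :
  contract3 (t1 + t2) x y = contract3 t1 x y + contract3 t2 x y.
Proof.
apply/matrixP => a b; rewrite !mxE -big_split; apply: eq_bigr => j1 _.
rewrite -big_split; apply: eq_bigr => i2 _; rewrite -big_split.
apply: eq_bigr => j2 _; rewrite -big_split; apply: eq_bigr => i3 _ /=.
by rewrite ffunE; ring.
Qed.

Lemma contract3N t x y : contract3 (- t) x y = - contract3 t x y.
Proof.
apply/matrixP => a b; rewrite !mxE -sumrN; apply: eq_bigr => j1 _.
rewrite -sumrN; apply: eq_bigr => i2 _; rewrite -sumrN.
apply: eq_bigr => j2 _; rewrite -sumrN; apply: eq_bigr => i3 _ /=.
by rewrite ffunE; ring.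
Qed.

Lemma P_of_mul_P_of r x y :
  P_of r x *m P_of r y = contract3 (mul3 (r12 r) (r23 r)) x y.
Proof.
apply/matrixP => a b; rewrite !mxE.
transitivity (\sum_c \sum_j1 \sum_i2 \sum_j2 \sum_i3
   r ((a, j1), (i2, c)) * x j1 i2 * (r ((c, j2), (i3, b)) * y j2 i3)).
  by apply: eq_bigr => c _; rewrite !P_ofE sum_mul_sum2.
rewrite exchange_big5; apply: eq_bigr => j1 _; apply: eq_bigr => i2 _.
apply: eq_bigr => j2 _; apply: eq_bigr => i3 _.
by rewrite mul3_r12_r23E !big_distrl; apply: eq_bigr => c _ /=; ring.
Qed.

Lemma P_of_mull r x y :
  P_of r (P_of r x *m y) = contract3 (mul3 (r13 r) (r12 r)) x y.
Proof.
apply/matrixP => a b; rewrite P_ofE mxE.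
transitivity (\sum_j \sum_k \sum_c \sum_j1 \sum_i2
   r ((a, j), (k, b)) * (r ((j, j1), (i2, c)) * x j1 i2) * y c k).
  apply: eq_bigr => j _; apply: eq_bigr => k _.
  rewrite mxE mulr_sumr; apply: eq_bigr => c _.
  rewrite P_ofE big_distrl mulr_sumr; apply: eq_bigr => j1 _.
  rewrite big_distrl mulr_sumr; apply: eq_bigr => i2 _; exact: mulrA.
rewrite exchange_big5 exchange_big4 exchange_big3.
apply: eq_bigr => j1 _; apply: eq_bigr => i2 _.
apply: eq_bigr => j2 _; apply: eq_bigr => i3 _.
by rewrite mul3_r13_r12E !big_distrl; apply: eq_bigr => c _ /=; ring.
Qed.

Lemma P_of_mulr r x y :
  P_of r (x *m P_of r y) = contract3 (mul3 (r23 r) (r13 r)) x y.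
Proof.
apply/matrixP => a b; rewrite P_ofE mxE.
transitivity (\sum_j \sum_k \sum_c \sum_j2 \sum_i3
   r ((a, j), (k, b)) * (x j c * (r ((c, j2), (i3, k)) * y j2 i3))).
  apply: eq_bigr => j _; apply: eq_bigr => k _.
  rewrite mxE mulr_sumr; apply: eq_bigr => c _.
  rewrite P_ofE mulr_sumr mulr_sumr; apply: eq_bigr => j2 _.
  by rewrite mulr_sumr mulr_sumr.
apply: eq_bigr => j1 _; rewrite exchange_big4; apply: eq_bigr => i2 _.
apply: eq_bigr => j2 _; apply: eq_bigr => i3 _.
by rewrite mul3_r23_r13E !big_distrl; apply: eq_bigr => c _ /=; ring.
Qed.

Definition aybe_defect r : tensor3 F n :=
  mul3 (r13 r) (r12 r) - mul3 (r12 r) (r23 r) + mul3 (r23 r) (r13 r).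

Lemma RB0_defect_P_of r x y :
  P_of r (P_of r x *m y + x *m P_of r y) - P_of r x *m P_of r y =
  contract3 (aybe_defect r) x y.
Proof.
have P_ofD u v : P_of r (u + v) = P_of r u + P_of r v.
  by have := P_of_is_linear r 1 u v; rewrite !scale1r.
rewrite P_ofD P_of_mull P_of_mulr P_of_mul_P_of /aybe_defect.
by rewrite !contract3D contract3N addrAC.
Qed.

Lemma AYBE_RB0_P_of r : AYBE r -> RB0 (P_of r).
Proof.
move=> aybe_r; split=> [|x y]; first exact: P_of_is_linear.
apply/eqP; rewrite eq_sym -subr_eq0 RB0_defect_P_of.
rewrite (aybe_r : aybe_defect r = 0).
by apply/eqP/(addrI (contract3 0 x y)); rewrite -contract3D !addr0.
Qed.

Lemma P_of_RB0_AYBE r :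
  (forall x y, P_of r x *m P_of r y = P_of r (P_of r x *m y + x *m P_of r y)) ->
  AYBE r.
Proof.
move=> RB_r; apply/ffunP => -[[[a j1] [i2 j2]] [i3 b]].
rewrite [RHS]ffunE -/(aybe_defect r) -contract3_delta_mx.
by rewrite -RB0_defect_P_of RB_r subrr mxE.
Qed.


Definition coef_tensor (f : 'M[F]_n -> 'M[F]_n) : tensor2 F n :=
  [ffun p => f (delta_mx p.1.2 p.2.1) p.1.1 p.2.2].

Lemma P_of_coef_tensor (f : 'M[F]_n -> 'M[F]_n) :
  linear f -> P_of (coef_tensor f) =1 f.
Proof.
move=> lin_f x; pose g : {linear 'M[F]_n -> 'M[F]_n} :=
  HB.pack f (GRing.isLinear.Build _ _ _ _ f lin_f).
apply/matrixP => a b; rewrite P_ofE [in RHS](matrix_sum_delta x).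
rewrite -[f _]/(g _) linear_sum summxE; apply: eq_bigr => j _.
rewrite linear_sum summxE; apply: eq_bigr => k _.
by rewrite linearZ mxE ffunE mulrC.
Qed.

End MatrixTensors.

Theorem theorem4 (F : fieldType) (n : nat) (hn : (0 < n)%N) :
  (forall r : tensor2 F n, AYBE r -> RB0 (P_of r)) /\
  (forall r1 r2 : tensor2 F n, AYBE r1 -> AYBE r2 -> P_of r1 =1 P_of r2 -> r1 = r2) /\
  (forall R : 'M[F]_n -> 'M[F]_n, RB0 R -> exists r : tensor2 F n, AYBE r /\ P_of r =1 R).
Proof.
(* The argument does not need [hn]. *)
split; [exact: AYBE_RB0_P_of | split=> [r1 r2 _ _ | R [lin_R RB_R]]].
  exact: P_of_inj.
have P_of_R := P_of_coef_tensor lin_R.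
exists (coef_tensor R); split=> //; apply: P_of_RB0_AYBE => x y.
by rewrite !P_of_R RB_R.
Qed.
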